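(* Let $d\ge2$, $n\ge1$ and let $H=(H_1,\dots,H_n):\mathbb{C}^n\to\mathbb{C}^n$ with $H_i(X)=\sum_{|\alpha|=d}\frac{H_{i,\alpha}}{\alpha!}X^\alpha$ for complex coefficients $H_{i,\alpha}$. Suppose the Jacobian matrix $JH$ satisfies $(JH)^p=0$ for some integer $1\le p\le n$. Then for every $k\ge1$, every $i\in[n]$, every $\alpha\in\mathbb{Z}^n_{\ge0}$ with $|\alpha|=(d-1)k+1$, and every length-$p$ shuffle class $\mathcal{S}$ in $\mathcal{C}_k^{(d)}$, $$\sum_{T\in\mathcal{S}}E_{i,\alpha,H}(T)=0.$$
   Context: A $d$-Catalan tree is a rooted planar tree in which each vertex has $0$ or $d$ children; $\mathcal{C}_k^{(d)}$ is the set of those with $k$ internal vertices (hence $(d-1)k+1$ leaves). For a path $(v_0,\dots,v_p)$ in $T$ ($v_i$ a child of $v_{i-1}$), the siblings of $v_1,\dots,v_p$ subtend $(d-1)p$ subtrees; the shuffle class $\mathrm{Sh}(T;v_0,\dots,v_p)\subseteq\mathcal{C}_k^{(d)}$ consists of all trees obtained from $T$ by rearranging these subtrees among the sibling positions, all else fixed; a length-$p$ shuffle class is any set of this form. A labelling of $T=(V,E)$ is a function $\tau:V\to[n]$; it is an $(i,\alpha)$ labelling if the root has type $i$ and exactly $\alpha_\ell$ leaves have type $\ell$ for each $\ell$. For an internal vertex $v$, $\mu(v)\in\mathbb{Z}^n_{\ge0}$ counts its children of each type. The $H$-weight of a labelling $\mathcal{T}=(T,\tau)$ is $\mathcal{E}_H(\mathcal{T})=\prod_{v\text{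 internal}}H_{\tau(v),\mu(v)}$, and $E_{i,\alpha,H}(T):=\sum_{(i,\alpha)\text{ labellings }\mathcal{T}\text{ of }T}\mathcal{E}_H(\mathcal{T})$. $(JH)_{i,j}=\partial H_i/\partial X_j$. *)

From HB Require Import structures.
From mathcomp Require Import all_boot all_order all_algebra.
From mathcomp Require Import mpoly complex Rstruct.
Set Implicit Arguments. Unset Strict Implicit. Unset Printing Implicit Defensive.
Import Order.TTheory GRing.Theory Num.Theory.
Local Open Scope ring_scope.

Definition C : numClosedFieldType := complex Rdefinitions.R.

Definition jacobian (n : nat) (H : 'I_n -> {mpoly C[n]}) : 'M[{mpoly C[n]}]_n :=
  \matrix_(i < n, j < n) mderiv j (H i).

Definition mxpow (R : pzRingType) (n : nat) (A : 'M[R]_n) (p : nat) : 'M[R]_n :=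
  iter p (fun B => B *m A) 1%:M.

Definition mfact (n : nat) (a : 'X_{1..n}) : nat := (\prod_(j < n) (a j)`!)%N.

(* H_{i,alpha}, determined by H_i = sum_alpha H_{i,alpha}/alpha! X^alpha *)
Definition Hcoef (n : nat) (H : 'I_n -> {mpoly C[n]}) (i : 'I_n) (a : 'X_{1..n}) : C :=
  (mfact a)%:R * (H i)@_a.

(* Unlabelled rooted planar trees: Leaf tt is a leaf, Node 0 ts an internal
   vertex with the ordered list of children ts. *)
Definition ctree := GenTree.tree unit.

Fixpoint dcat (d : nat) (t : ctree) : bool :=
  match t with
  | GenTree.Leaf _ => true
  | GenTree.Node m ts => (m == 0%N) && (size ts == d) && all (dcat d) ts
  end.

Fixpoint nint (t : ctree) : nat :=
  match t with
  | GenTree.Leaf _ => 0%N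
  | GenTree.Node _ ts => (sumn (map nint ts)).+1
  end.

Definition catalan (d k : nat) (t : ctree) : bool := dcat d t && (nint t == k).

Inductive ltree (n : nat) : Type :=
| LLeaf of 'I_n
| LNode of 'I_n & seq (ltree n).

Definition lroot (n : nat) (t : ltree n) : 'I_n :=
  match t with LLeaf j => j | LNode j _ => j end.

Fixpoint lleaves (n : nat) (t : ltree n) : seq 'I_n :=
  match t with
  | LLeaf j => [:: j]
  | LNode _ cs => flatten (map (@lleaves n) cs)
  end.

Definition mu (n : nat) (cs : seq (ltree n)) : 'X_{1..n} :=
  [multinom count (fun c => lroot c == l) cs | l < n].

Fixpoint lweight (n : nat) (Hc : 'I_n -> 'X_{1..n} -> C) (t : ltree n) : C :=
  match t with
  | LLeaf _ => 1
  | LNode j cs => Hc j (mu cs) * foldr (fun c r => lweight Hc c * r) 1 cs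
  end.

Definition cprod (A : Type) (ls : seq (seq A)) : seq (seq A) :=
  foldr (fun l acc => [seq x :: y | x <- l, y <- acc]) [:: [::]] ls.

Fixpoint labellings (n : nat) (t : ctree) : seq (ltree n) :=
  match t with
  | GenTree.Leaf _ => [seq LLeaf j | j <- enum 'I_n]
  | GenTree.Node _ ts =>
      [seq LNode j cs | j <- enum 'I_n, cs <- cprod (map (@labellings n) ts)]
  end.

Definition is_ia_labelling (n : nat) (i : 'I_n) (a : 'X_{1..n}) (t : ltree n) : bool :=
  (lroot t == i) && [forall l : 'I_n, count_mem l (lleaves t) == a l].

Definition Eweight (n : nat) (Hc : 'I_n -> 'X_{1..n} -> C) (i : 'I_n) (a : 'X_{1..n})
    (T : ctree) : C :=
  \sum_(t <- labellings n T | is_ia_labelling i a t) lweight Hc t.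

Fixpoint subt (t : ctree) (a : seq nat) : option ctree :=
  match a with
  | [::] => Some t
  | c :: a' =>
      match t with
      | GenTree.Leaf _ => None
      | GenTree.Node _ ts => if (c < size ts)%N then subt (nth t ts c) a' else None
      end
  end.

Fixpoint repl (t : ctree) (a : seq nat) (s : ctree) : ctree :=
  match a with
  | [::] => s
  | c :: a' =>
      match t with
      | GenTree.Leaf _ => t
      | GenTree.Node m ts => GenTree.Node m (set_nth t ts c (repl (nth t ts c) a' s))
      end
  end.

(* For the path from the root of t following child indices cs = (c_1,..,c_p):
   the subtrees subtended by the siblings of v_1, ..., v_p, listed level by
   level, left to right (the "sibling positions"). *)
Fixpoint sibs (t : ctree) (cs : seq nat) : seq ctree :=
  match cs with
  | [::] => [::]
  | c :: cs' =>
      match t with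
      | GenTree.Leaf _ => [::]
      | GenTree.Node _ ts => take c ts ++ drop c.+1 ts ++ sibs (nth t ts c) cs'
      end
  end.

(* put the subtrees of L into the sibling positions (in the order of sibs);
   rebuild t cs (sibs t cs) = t. *)
Fixpoint rebuild (t : ctree) (cs : seq nat) (L : seq ctree) : ctree :=
  match cs with
  | [::] => t
  | c :: cs' =>
      match t with
      | GenTree.Leaf _ => t
      | GenTree.Node m ts =>
          let k := (size ts).-1 in
          let L1 := take k L in
          GenTree.Node m (take c L1 ++ rebuild (nth t ts c) cs' (drop k L) :: drop c L1)
      end
  end.

(* Sh(T; v_0, ..., v_p), where v_0 is the vertex at address a0 and v_j is the
   c_j-th child of v_{j-1}, cs = (c_1, ..., c_p): all trees obtained from T by
   rearranging the sibling subtrees among the sibling positions (as a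
   duplicate-free list). *)
Definition shuffle_class (T : ctree) (a0 : seq nat) (cs : seq nat) : seq ctree :=
  let t0 := odflt T (subt T a0) in
  undup [seq repl T a0 (rebuild t0 cs L) | L <- permutations (sibs t0 cs)].

(* The weights E_{j,alpha}(T) are the coefficients of a vector of polynomials
   tree_poly T, indexed by the root type j. At an internal vertex of type j
   this vector is D^d H_j, the symmetric d-linear form of H_j, applied to the
   vectors of the children. Along the path v_0, ..., v_p it therefore factors
   as a product of p matrices D^d H(e_l, s_1, ..., s_{d-1}), fed with the
   vectors s of the sibling subtrees, times the vector of the subtree at v_p,
   and the rest of T acts linearly on the vector at v_0. The sum of the
   product over all arrangements of the siblings is the coefficient of t^m in
   the same product with every slot filled by Y = sum_a t_a S_a, where the S_a
   are the distinct sibling vectors and m their multiplicities. With all slots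
   equal to Y each factor is (d-1)! JH evaluated at Y, and (JH)^p = 0. *)

From HB Require Import structures.
From mathcomp Require Import all_boot all_order all_algebra.
From mathcomp Require Import mpoly complex Rstruct.
From mathcomp Require Import ring zify.
Import Order.TTheory GRing.Theory Num.Theory.
Set Implicit Arguments. Unset Strict Implicit. Unset Printing Implicit Defensive.
Local Open Scope ring_scope.

Lemma zip_nseql (S T : Type) (x : S) (t : seq T) :
  zip (nseq (size t) x) t = map (pair x) t.
Proof. by elim: t => //= y t ->. Qed.

Lemma zip_mapl (S T U : Type) (f : S -> U) (s : seq S) (t : seq T) :
  zip (map f s) t = map (fun p => (f p.1, p.2)) (zip s t).
Proof. by elim: s t => [|x s IH] [|y t] //=; rewrite IH. Qed.

Lemma size_take_dropS (T : Type) (s : seq T) c :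
  (c < size s)%N -> size (take c s ++ drop c.+1 s) = (size s).-1.
Proof. by move=> c_lt; rewrite size_cat size_take size_drop c_lt; lia. Qed.

(** * Words *)

Section CartesianProduct.
Variables (A : Type) (R : Type) (idx : R) (op : Monoid.law idx).

Lemma big_cprod_cons (x : seq A) L (F : seq A -> R) :
  \big[op/idx]_(s <- cprod (x :: L)) F s =
  \big[op/idx]_(a <- x) \big[op/idx]_(s <- cprod L) F (a :: s).
Proof. exact: big_allpairs_dep. Qed.

Lemma big_cprod_cat L1 L2 (F : seq A -> R) :
  \big[op/idx]_(s <- cprod (L1 ++ L2)) F s =
  \big[op/idx]_(s1 <- cprod L1) \big[op/idx]_(s2 <- cprod L2) F (s1 ++ s2).
Proof.
elim: L1 F => [|x L1 IH] F /=; first by rewrite big_seq1.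
by rewrite !big_cprod_cons; apply: eq_bigr => a _; rewrite IH.
Qed.

End CartesianProduct.

Lemma uniq_cprod (A : eqType) (L : seq (seq A)) : all uniq L -> uniq (cprod L).
Proof.
elim: L => [|x L IH] //= /andP[ux uL].
by apply: allpairs_uniq_dep => // [? _|[a s] [b t] _ _ /= [-> ->] //]; apply: IH.
Qed.

Definition words (n k : nat) : seq (seq 'I_n) := cprod (nseq k (enum 'I_n)).

Lemma words0 n : words n 0 = [:: [::]].
Proof. by []. Qed.

Lemma mem_words n k ws : (ws \in words n k) = (size ws == k).
Proof.
elim: k ws => [|k IH] ws; first by case: ws.
rewrite /words /=; apply/allpairsPdep/idP => [[l [ws' [_ ws'_in ->]]]|].
  by rewrite /= eqSS -IH.
case: ws => [|l ws] //; rewrite eqSS -IH => ws_in.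
by exists l, ws; rewrite mem_enum.
Qed.

Lemma size_words n k ws : ws \in words n k -> size ws = k.
Proof. by rewrite mem_words => /eqP. Qed.

Lemma uniq_words n k : uniq (words n k).
Proof. by apply: uniq_cprod; rewrite all_nseq enum_uniq orbT. Qed.

Section BigWords.
Variables (n : nat) (R : Type) (idx : R) (op : Monoid.com_law idx).

Lemma big_wordsS k (F : seq 'I_n -> R) :
  \big[op/idx]_(ws <- words n k.+1) F ws =
  \big[op/idx]_(l < n) \big[op/idx]_(ws <- words n k) F (l :: ws).
Proof. by rewrite big_cprod_cons big_enum. Qed.

Lemma big_wordsD k1 k2 (F : seq 'I_n -> R) :
  \big[op/idx]_(ws <- words n (k1 + k2)) F ws =
  \big[op/idx]_(ws1 <- words n k1) \big[op/idx]_(ws2 <- words n k2) F (ws1 ++ ws2).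
Proof. by rewrite /words nseqD big_cprod_cat. Qed.

End BigWords.

Lemma prod_sum_words (R : comNzRingType) (I : Type) (xs : seq I) q
    (f : I -> 'I_q -> R) :
  \prod_(x <- xs) \sum_(a < q) f x a =
  \sum_(ws <- words q (size xs)) \prod_(p <- zip xs ws) f p.1 p.2.
Proof.
elim: xs => [|x xs IH]; first by rewrite words0 big_seq1 !big_nil.
rewrite big_cons IH big_wordsS mulr_suml; apply: eq_bigr => a _.
by rewrite mulr_sumr; apply: eq_bigr => ws _; rewrite big_cons.
Qed.

Lemma sum_cprod_roots (R : comNzRingType) (B : Type) n (root : B -> 'I_n)
    (g : B -> R) (h : seq 'I_n -> R) (Ls : seq (seq B)) :
  \sum_(cs <- cprod Ls) h (map root cs) * \prod_(c <- cs) g c =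
  \sum_(ls <- words n (size Ls))
    h ls * \prod_(p <- zip Ls ls) \sum_(c <- p.1 | root c == p.2) g c.
Proof.
elim: Ls h => [|x Ls IH] h; first by rewrite words0 !big_seq1 !big_nil.
rewrite big_cprod_cons /= big_wordsS.
transitivity (\sum_(a <- x) g a * \sum_(ls <- words n (size Ls))
    h (root a :: ls) * \prod_(p <- zip Ls ls) \sum_(c <- p.1 | root c == p.2) g c).
  apply: eq_bigr => a _; rewrite -IH mulr_sumr.
  by apply: eq_bigr => cs _; rewrite big_cons /=; ring.
rewrite (partition_big root xpredT) //=; apply: eq_bigr => l _.
under eq_bigr => a /eqP root_a do rewrite root_a.
rewrite -mulr_suml mulr_sumr; apply: eq_bigr => ls _.
by rewrite big_cons /=; ring.
Qed.

Section WordMultinomial.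
Variable n : nat.
Implicit Types (l : 'I_n) (ws : seq 'I_n).

Definition mnm_of ws : 'X_{1..n} := [multinom count_mem l ws | l < n].

Lemma mnm_of_nil : mnm_of [::] = 0%MM.
Proof. by apply/mnmP => l; rewrite !mnmE. Qed.

Lemma mnm_of_cons l ws : mnm_of (l :: ws) = (U_(l) + mnm_of ws)%MM.
Proof. by apply/mnmP => i; rewrite mnmDE !mnmE. Qed.

Lemma mnm_of_cat ws1 ws2 : mnm_of (ws1 ++ ws2) = (mnm_of ws1 + mnm_of ws2)%MM.
Proof. by apply/mnmP => i; rewrite mnmDE !mnmE count_cat. Qed.

Lemma prod_mpolyX (R : nzRingType) ws :
  \prod_(l <- ws) ('X_l : {mpoly R[n]}) = 'X_[mnm_of ws].
Proof.
elim: ws => [|l ws IH]; first by rewrite big_nil mnm_of_nil mpolyX0.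
by rewrite big_cons IH mnm_of_cons mpolyXD.
Qed.

End WordMultinomial.

Section MultinomialCount.
Variable n : nat.
Implicit Types (l : 'I_n) (m b : 'X_{1..n}).

Lemma mfactU l m : mfact (U_(l) + m)%MM = (mfact m * (m l).+1)%N.
Proof.
rewrite /mfact (bigD1 l) //= [in RHS](bigD1 l) //= mnmDE mnm1E eqxx add1n factS.
rewrite [RHS]mulnC mulnA; congr (_ * _)%N.
by apply: eq_bigr => i ne_il; rewrite mnmDE mnm1E eq_sym (negbTE ne_il).
Qed.

Lemma addUm_eq l m b : ((U_(l) + m)%MM == b) = (0 < b l)%N && (m == b - U_(l))%MM.
Proof.
apply/eqP/andP => [<-|[bl_gt0 /eqP ->]].
  by rewrite mnmDE mnm1E eqxx addmC addmK.
by rewrite addmC submK //; apply/mnm_lepP => i; rewrite mnm1E; case: eqP => [<-|].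
Qed.

Lemma count_words_mnm_of k b : mdeg b = k ->
  (count (fun ws => mnm_of ws == b) (words n k) * mfact b)%N = k`!.
Proof.
elim: k b => [|k IH] b deg_b.
  move/eqP: deg_b; rewrite mdeg_eq0 => /eqP ->.
  by rewrite /= mnm_of_nil eqxx /mfact big1 // => i _; rewrite mnm0E.
rewrite -sum1_count big_mkcond big_wordsS big_distrl /=.
transitivity (\sum_(l < n) k`! * b l)%N; last first.
  by rewrite -big_distrr -mdegE deg_b factS mulnC.
apply: eq_bigr => l _; rewrite -big_mkcond sum1_count.
under eq_count do rewrite mnm_of_cons addUm_eq.
have [bl0|bl_gt0] := posnP (b l).
  by rewrite bl0 muln0 (eq_count (a2 := pred0)) ?count_pred0.
have Eb : b = (U_(l) + (b - U_(l)))%MM by apply/eqP; rewrite eq_sym addUm_eq bl_gt0 /=.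
rewrite {2}Eb mfactU mnmBE mnm1E eqxx subn1 prednK // mulnA IH //.
by move/eqP: deg_b; rewrite {1}Eb mdegD mdeg1 add1n eqSS => /eqP.
Qed.

End MultinomialCount.

(** * Polarization *)

Section PolarForm.
Variables (n : nat) (R : comNzRingType).
Implicit Types (ys : seq ('I_n -> R)).

(* If H_j = sum_alpha hc(alpha) / alpha! X^alpha, then [polar hc ys] is the
   (size ys)-th derivative of H_j applied to ys, and the (j, l) entry of
   [polar_mx hc ys] is D^(size ys).+1 H_j (e_l, ys). *)
Definition polar (hc : 'X_{1..n} -> R) ys : R :=
  \sum_(ws <- words n (size ys)) hc (mnm_of ws) * \prod_(p <- zip ys ws) p.1 p.2.

Lemma polar_cat_cons hc ys1 y ys2 :
  polar hc (ys1 ++ y :: ys2) =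
  \sum_(l < n) y l * polar (fun m => hc (U_(l) + m)%MM) (ys1 ++ ys2).
Proof.
rewrite /polar !size_cat /= big_wordsD.
under eq_bigr do rewrite big_wordsS.
under [RHS]eq_bigr do rewrite big_wordsD mulr_sumr.
rewrite exchange_big /=; apply: eq_bigr => l _.
rewrite big_seq [RHS]big_seq; apply: eq_bigr => ws1 /size_words size_ws1.
rewrite mulr_sumr; apply: eq_bigr => ws2 _.
rewrite !zip_cat ?size_ws1 // !big_cat /= big_cons !mnm_of_cat mnm_of_cons.
by rewrite addmA [(mnm_of ws1 + _)%MM]addmC -addmA /=; ring.
Qed.

Definition polar_mx (hc : 'I_n -> 'X_{1..n} -> R) ys : 'M[R]_n :=
  \matrix_(j, l) polar (fun m => hc j (U_(l) + m)%MM) ys.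

Fixpoint polar_chain (hc : 'I_n -> 'X_{1..n} -> R) (k e : nat) ys : 'M[R]_n :=
  if k is k'.+1 then polar_mx hc (take e ys) *m polar_chain hc k' e (drop e ys)
  else 1%:M.

Lemma polar_chainS hc k e ys :
  polar_chain hc k.+1 e ys = polar_mx hc (take e ys) *m polar_chain hc k e (drop e ys).
Proof. by []. Qed.

Lemma polar_chainS_cat hc k e ys1 ys2 : size ys1 = e ->
  polar_chain hc k.+1 e (ys1 ++ ys2) = polar_mx hc ys1 *m polar_chain hc k e ys2.
Proof. by move=> <-; rewrite polar_chainS take_size_cat ?drop_size_cat. Qed.

Lemma polar_chain_nseq hc e k y :
  polar_chain hc k e (nseq (e * k) y) = polar_mx hc (nseq e y) ^+ k.
Proof.
elim: k => [|k IH]; first by rewrite expr0.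
by rewrite exprS mulnS nseqD polar_chainS_cat ?size_nseq // IH mulmxE.
Qed.

End PolarForm.

Lemma map_polar_mx_nseq (R S : comNzRingType) (f : {rmorphism R -> S}) n
    (hc : 'I_n -> 'X_{1..n} -> R) (hc' : 'I_n -> 'X_{1..n} -> S)
    (y : 'I_n -> R) (y' : 'I_n -> S) e :
  (forall j m, f (hc j m) = hc' j m) -> (forall l, f (y l) = y' l) ->
  map_mx f (polar_mx hc (nseq e y)) = polar_mx hc' (nseq e y').
Proof.
move=> Ehc Ey; apply/matrixP => j l; rewrite !mxE /polar !size_nseq rmorph_sum.
apply: eq_big_seq => ws /size_words <-; rewrite rmorphM rmorph_prod Ehc !zip_nseql.
by rewrite !big_map; under eq_bigr do rewrite Ey.
Qed.

Lemma polar_mx_X_jacobian d n (H : 'I_n -> {mpoly C[n]}) :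
  (0 < d)%N -> (forall i, H i \is d.-homog) ->
  polar_mx (fun j m => (Hcoef H j m)%:MP) (nseq (d - 1) (fun l => 'X_l)) =
  (d - 1)`!%:R *: jacobian H.
Proof.
move=> d_gt0 homH; apply/matrixP => j l; apply/mpolyP => b.
rewrite !mxE /polar size_nseq mulr_natl mcoeffMn mcoeff_mderiv raddf_sum /=.
transitivity (\sum_(ws <- words n (d - 1) | mnm_of ws == b) Hcoef H j (U_(l) + b)%MM).
  rewrite [RHS]big_mkcond; apply: eq_big_seq => ws /size_words size_ws.
  rewrite -{1}size_ws zip_nseql big_map prod_mpolyX mcoeffCM mcoeffX.
  by case: eqP => [->|_]; rewrite ?mulr1 ?mulr0.
rewrite big_const_seq iter_addr addr0 /Hcoef mfactU addmC.
have [degb|degb] := eqVneq (mdeg b) (d - 1)%N.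
  rewrite mulr_natl -!mulrnA -(count_words_mnm_of degb); congr (_ *+ _); ring.
rewrite (dhomog_nemf_coeff (homH j)) ?mulr0 ?mul0rn //.
change (mdeg (b + U_(l))%MM != d); rewrite mdegD mdeg1 addn1.
by apply: contra degb => /eqP <-; rewrite subn1.
Qed.

Lemma mxpowE (R : pzRingType) n (A : 'M[R]_n) k : mxpow A k = A ^+ k.
Proof. by elim: k => [|k IH]; rewrite ?expr0 // exprSr -IH. Qed.

Lemma mxpowZ (R : comNzRingType) n (c : R) (A : 'M[R]_n) k :
  mxpow (c *: A) k = c ^+ k *: mxpow A k.
Proof.
elim: k => [|k IH]; first by rewrite expr0 scale1r.
change (mxpow (c *: A) k *m (c *: A) = c ^+ k.+1 *: (mxpow A k *m A)).
by rewrite IH -scalemxAl -scalemxAr scalerA exprSr.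
Qed.

Lemma polar_mx_jacobian_nilpotent d n p (H : 'I_n -> {mpoly C[n]}) :
  (0 < d)%N -> (forall i, H i \is d.-homog) -> mxpow (jacobian H) p = 0 ->
  polar_mx (fun j m => ((Hcoef H j m)%:MP)%:MP : {mpoly {mpoly C[n]}[n]})
    (nseq (d - 1) (fun l => 'X_l)) ^+ p = 0.
Proof.
move=> d_gt0 homH nilJ.
rewrite -(map_polar_mx_nseq (f := map_mpoly (@mpolyC n C))
  (hc := fun j m => (Hcoef H j m)%:MP) (y := fun l => 'X_l)) => [|j m|l].
- by rewrite -rmorphXn polar_mx_X_jacobian // -mxpowE mxpowZ nilJ scaler0 rmorph0.
- exact: map_mpolyC.
- exact: map_mpolyX.
Qed.

Section PolarExpansion.
Variables (n q : nat) (R : comNzRingType).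
Variables (hc : 'I_n -> 'X_{1..n} -> R) (v : 'I_q -> 'I_n -> R).
Local Notation hcC := (fun j m => (hc j m)%:MP : {mpoly R[q]}).
Local Notation Y := (fun l => \sum_(a < q) 'X_a * (v a l)%:MP : {mpoly R[q]}).

Lemma prod_zip_X_mpolyC (ls : seq 'I_n) (bs : seq 'I_q) : size ls = size bs ->
  \prod_(p <- zip ls bs) ('X_p.2 * (v p.2 p.1)%:MP) =
  'X_[mnm_of bs] * (\prod_(p <- zip (map v bs) ls) p.1 p.2)%:MP.
Proof.
elim: ls bs => [|l ls IH] [|b bs] //= => [_|[size_eq]].
  by rewrite !big_nil mnm_of_nil mpolyX0 mpolyC1 mulr1.
by rewrite !big_cons IH // mnm_of_cons mpolyXD mpolyCM /=; ring.
Qed.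

Lemma polar_mx_expand e :
  polar_mx hcC (nseq e Y) =
  \sum_(bs <- words q e) 'X_[mnm_of bs] *: map_mx (@mpolyC q R) (polar_mx hc (map v bs)).
Proof.
apply/matrixP => j l; rewrite summxE !mxE /polar size_nseq.
under eq_big_seq => ls /size_words size_ls.
  rewrite -{1}size_ls zip_nseql big_map prod_sum_words size_ls mulr_sumr.
  over.
rewrite exchange_big /=; apply: eq_big_seq => bs /size_words size_bs.
rewrite !mxE /polar size_map size_bs rmorph_sum mulr_sumr.
apply: eq_big_seq => ls /size_words size_ls.
by rewrite prod_zip_X_mpolyC ?size_ls ?size_bs // rmorphM mulrCA.
Qed.

Lemma polar_chain_expand e k :
  polar_chain hcC k e (nseq (e * k) Y) =
  \sum_(ws <- words q (e * k))
     'X_[mnm_of ws] *: map_mx (@mpolyC q R) (polar_chain hc k e (map v ws)).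
Proof.
elim: k => [|k IH].
  by rewrite muln0 words0 big_seq1 mnm_of_nil mpolyX0 scale1r map_mx1.
rewrite mulnS nseqD polar_chainS_cat ?size_nseq // polar_mx_expand IH big_wordsD.
rewrite mulmx_suml; apply: eq_big_seq => bs /size_words size_bs.
rewrite mulmx_sumr; apply: eq_bigr => ws _.
rewrite -scalemxAl -scalemxAr scalerA mnm_of_cat mpolyXD map_cat.
by rewrite polar_chainS_cat ?size_map // map_mxM.
Qed.

End PolarExpansion.

(** * Permutations of a sequence as words *)

Section PermutationsAsWords.
Variables (X : eqType) (S : seq X).
Local Notation q := (size (undup S)).

Definition undup_val (a : 'I_q) : X := tnth (in_tuple (undup S)) a.

Definition mnm_undup : 'X_{1..q} := [multinom count_mem (undup_val a) S | a < q].

Lemma undup_val_inj : injective undup_val.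
Proof. by apply/tuple_uniqP; rewrite undup_uniq. Qed.

Lemma undup_valP x : x \in S -> exists a, undup_val a = x.
Proof. by rewrite -mem_undup => /(tnthP (in_tuple _)) [a ->]; exists a. Qed.

Lemma undup_val_mem a : undup_val a \in S.
Proof. by rewrite -mem_undup; apply: (mem_tnth a (in_tuple _)). Qed.

Lemma perm_eq_map_undup_val ws : perm_eq (map undup_val ws) S = (mnm_of ws == mnm_undup).
Proof.
have count_uv a : count_mem (undup_val a) (map undup_val ws) = count_mem a ws.
  by rewrite count_map; apply: eq_count => b /=; rewrite (inj_eq undup_val_inj).
apply/idP/eqP => [/permP perm_ws|mnm_ws].
  by apply/mnmP => a; rewrite !mnmE -count_uv perm_ws.
apply/allP => x _; apply/eqP; have [xS|xNS] := boolP (x \in S).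
  have [a <-] := undup_valP xS; rewrite count_uv.
  by move/mnmP: mnm_ws => /(_ a); rewrite !mnmE.
rewrite (count_memPn xNS); apply/count_memPn; apply: contra xNS.
by case/mapP => a _ ->; apply: undup_val_mem.
Qed.

Lemma map_undup_valP (L : seq X) : {subset L <= S} -> exists ws, map undup_val ws = L.
Proof.
elim: L => [|x L IH] LS; first by exists [::].
have [a <-] := undup_valP (LS x (mem_head x L)).
have [ws <-] : exists ws, map undup_val ws = L.
  by apply: IH => y Ly; apply: LS; rewrite inE Ly orbT.
by exists (a :: ws).
Qed.

Lemma big_permutations_words (V : nmodType) (F : seq X -> V) :
  \sum_(L <- permutations S) F L =
  \sum_(ws <- words q (size S) | mnm_of ws == mnm_undup) F (map undup_val ws).
Proof.
rewrite -[RHS]big_filter -[RHS](big_map (map undup_val) xpredT); apply: perm_big.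
apply: uniq_perm; first exact: permutations_uniq.
  by rewrite map_inj_uniq ?filter_uniq ?uniq_words //; apply/inj_map/undup_val_inj.
move=> L; rewrite mem_permutations; apply/idP/mapP => [LS|[ws]].
  have [ws Ews] : exists ws, map undup_val ws = L.
    by apply: map_undup_valP => x; rewrite (perm_mem LS).
  exists ws => //; rewrite mem_filter -perm_eq_map_undup_val Ews LS mem_words.
  by rewrite -(perm_size LS) -Ews size_map /=.
by rewrite mem_filter -perm_eq_map_undup_val => /andP [? _] ->.
Qed.

End PermutationsAsWords.

Lemma sum_permutations_polar_chain (R : comNzRingType) n (hc : 'I_n -> 'X_{1..n} -> R)
    e p (X : eqType) (S : seq X) (w : X -> 'I_n -> R) :
  polar_mx (fun j m => (hc j m)%:MP) (nseq e (fun l => 'X_l)) ^+ p = 0 ->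
  size S = (e * p)%N ->
  \sum_(L <- permutations S) polar_chain hc p e (map w L) = 0.
Proof.
(* Fill every slot with the combination Y of the distinct entries of S, with
   one fresh variable each: the chain vanishes, and its coefficient of the
   monomial mnm_undup S is the sum over the distinct arrangements of S. *)
move=> nilp sizeS; set q := size (undup S).
pose v (a : 'I_q) := w (undup_val a).
pose Y l := \sum_(a < q) 'X_a * (v a l)%:MP.
have chain0 : polar_chain (fun j m => (hc j m)%:MP) p e (nseq (e * p) Y) = 0.
  rewrite polar_chain_nseq -(map_polar_mx_nseq (f := mmap (@mpolyC q R) Y)
    (hc := fun j m => (hc j m)%:MP) (y := fun l => 'X_l)) => [|j m|l].
  - by rewrite -rmorphXn nilp rmorph0.
  - exact: mmapC.
  - exact: etrans (mmapX _ _ _) (mmap1U _ _).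
apply/matrixP => j l; move/matrixP/(_ j l)/(congr1 (mcoeff (mnm_undup S))): chain0.
rewrite polar_chain_expand !summxE raddf_sum !mxE raddf0 => coef0.
apply: etrans coef0; rewrite big_permutations_words sizeS big_mkcond.
apply: eq_bigr => ws _.
rewrite -map_comp !mxE /= mulrC mcoeffCM mcoeffX.
by case: eqP; rewrite ?mulr1 ?mulr0.
Qed.

(** * Trees *)

Section TreeSurgery.
Implicit Types (t s : ctree) (a cs : seq nat).

Lemma subt_cat t a cs : subt t (a ++ cs) = obind (subt^~ cs) (subt t a).
Proof. by elim: a t => [|c a IH] [x|m ts] //=; case: ifP. Qed.

Lemma dcat_subt d t a s : dcat d t -> subt t a = Some s -> dcat d s.
Proof.
elim: a t => [|c a IH] t; first by move=> dt [<-].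
case: t => [x|m ts] //= /andP[_ dts]; case: ifP => // c_lt.
by apply: IH; apply: (allP dts); rewrite mem_nth.
Qed.

Lemma subt_repl t a s : subt t a != None -> subt (repl t a s) a = Some s.
Proof.
elim: a t => [|c a IH] [x|m ts] //=; case: ifP => // c_lt sub_a.
set ts' := set_nth _ ts c _.
have c_lt' : (c < size ts')%N by rewrite size_set_nth leq_max leqnn.
by rewrite c_lt' (set_nth_default (GenTree.Node m ts)) // nth_set_nth /= eqxx IH.
Qed.

Lemma repl_inj t a : subt t a != None -> injective (repl t a).
Proof.
by move=> sub_a s1 s2 E; have := subt_repl s1 sub_a; rewrite E subt_repl // => -[].
Qed.

Lemma size_sibs d t cs :
  dcat d t -> subt t cs != None -> size (sibs t cs) = ((d - 1) * size cs)%N.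
Proof.
elim: cs t => [|c cs IH] t; first by rewrite muln0.
case: t => [x|m ts] //= /andP[/andP[_ /eqP size_ts] dts]; case: ifP => // c_lt sub_cs.
rewrite catA size_cat size_take_dropS // IH //; first by rewrite size_ts mulnS subn1.
by apply: (allP dts); rewrite mem_nth.
Qed.

Lemma sibs_rebuild t cs L :
  subt t cs != None -> size L = size (sibs t cs) -> sibs (rebuild t cs L) cs = L.
Proof.
elim: cs t L => [|c cs IH] t L; first by move=> _; case: L.
case: t => [x|m ts] //=; case: ifP => // c_lt sub_cs.
rewrite catA size_cat size_take_dropS // => size_L.
set k := (size ts).-1; set child := nth _ ts c.
have size_L1 : size (take k L) = k by rewrite size_takel // size_L leq_addr.
have size_L2 : size (drop k L) = size (sibs child cs) by rewrite size_drop size_L addKn.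
have size_s1 : size (take c (take k L)) = c.
  by rewrite size_takel // size_L1 -ltnS (ltn_predK c_lt).
rewrite nth_cat size_s1 ltnn subnn take_size_cat //.
rewrite -cat_rcons drop_size_cat ?size_rcons ?size_s1 //= IH //.
by rewrite catA !cat_take_drop.
Qed.

Lemma shuffle_classE T a0 cs t0 : subt T a0 = Some t0 -> subt t0 cs != None ->
  shuffle_class T a0 cs =
  [seq repl T a0 (rebuild t0 cs L) | L <- permutations (sibs t0 cs)].
Proof.
move=> sub_a0 sub_cs; rewrite /shuffle_class sub_a0 /=; apply: undup_id.
rewrite map_inj_in_uniq ?permutations_uniq // => L1 L2.
rewrite !mem_permutations => /perm_size L1S /perm_size L2S /(repl_inj _) E.
by rewrite -(sibs_rebuild sub_cs L1S) E ?sibs_rebuild // sub_a0.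
Qed.

End TreeSurgery.

Lemma ctree_ind_mem (P : ctree -> Prop) :
  (forall x, P (GenTree.Leaf x)) ->
  (forall m ts, (forall t, t \in ts -> P t) -> P (GenTree.Node m ts)) ->
  forall t, P t.
Proof.
move=> Pleaf Pnode; fix IH 1; case=> [x|m ts]; first exact: Pleaf.
(* [done] would close the nil case with [IH] itself, which the guard rejects. *)
apply: Pnode; elim: ts => [|t ts IHts] u; first by rewrite in_nil; discriminate.
rewrite inE => /orP[/eqP -> | /IHts Pu]; [exact: IH | exact: Pu].
Qed.

Section TreePolynomial.
Variables (n : nat) (Hc : 'I_n -> 'X_{1..n} -> C).
Local Notation HcC := (fun j m => (Hc j m)%:MP : {mpoly C[n]}).

Fixpoint tree_poly (t : ctree) : 'I_n -> {mpoly C[n]} :=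
  match t with
  | GenTree.Leaf _ => fun j => 'X_j
  | GenTree.Node _ ts => fun j => polar (HcC j) (map tree_poly ts)
  end.

Definition tree_col (t : ctree) : 'cV[{mpoly C[n]}]_n := \col_j tree_poly t j.

Local Notation lmonomial t := ((lweight Hc t)%:MP * 'X_[mnm_of (lleaves t)]).

Lemma lmonomial_node j cs :
  lmonomial (LNode j cs) =
  (Hc j (mnm_of (map (@lroot n) cs)))%:MP * \prod_(c <- cs) lmonomial c.
Proof.
rewrite /=; have -> : mu cs = mnm_of (map (@lroot n) cs).
  by apply/mnmP => l; rewrite !mnmE count_map.
have -> : foldr (fun c r => lweight Hc c * r) 1 cs = \prod_(c <- cs) lweight Hc c.
  by elim: cs => [|c cs /= ->]; rewrite ?big_nil ?big_cons.
rewrite -prod_mpolyX big_flatten big_map big_split /= rmorphM rmorph_prod -mulrA.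
by under [X in _ * (_ * X) = _]eq_bigr do rewrite prod_mpolyX.
Qed.

Lemma big_labellings_node (V : nmodType) m ts j (F : ltree n -> V) :
  \sum_(t <- labellings n (GenTree.Node m ts) | lroot t == j) F t =
  \sum_(cs <- cprod (map (labellings n) ts)) F (LNode j cs).
Proof.
rewrite big_mkcond big_allpairs_dep /= (bigD1_seq j) ?mem_enum ?enum_uniq //=.
rewrite [X in _ + X]big1 => [|j' ne_j'].
  by rewrite addr0; under eq_bigr do rewrite eqxx.
by rewrite big1 // => cs _; rewrite (negbTE ne_j').
Qed.

Lemma tree_poly_labellings T j :
  \sum_(t <- labellings n T | lroot t == j) lmonomial t = tree_poly T j.
Proof.
elim/ctree_ind_mem: T j => [x|m ts IH] j.
  rewrite big_map big_enum_cond /= big_pred1_eq /=.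
  by rewrite mnm_of_cons mnm_of_nil addm0 mpolyC1 mul1r.
rewrite big_labellings_node.
under eq_bigr do rewrite lmonomial_node.
rewrite (sum_cprod_roots _ (fun c => lmonomial c) (fun ls => (Hc j (mnm_of ls))%:MP)).
rewrite /= /polar !size_map; apply: eq_big_seq => ls /size_words size_ls.
congr (_ * _); rewrite !zip_mapl !big_map big_seq [RHS]big_seq.
apply: eq_bigr => p /(map_f fst).
by rewrite -[map fst _]/(unzip1 _) unzip1_zip ?size_ls // => /IH.
Qed.

Lemma Eweight_tree_poly i a T : Eweight Hc i a T = (tree_poly T i)@_a.
Proof.
rewrite -tree_poly_labellings raddf_sum /Eweight big_mkcond [RHS]big_mkcond /=.
apply: eq_bigr => t _; rewrite /is_ia_labelling; case: (lroot t == i) => //=.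
rewrite mcoeffCM mcoeffX.
have -> : [forall l, count_mem l (lleaves t) == a l] = (mnm_of (lleaves t) == a).
  apply/forallP/eqP => [Ea|<- l]; last by rewrite mnmE.
  by apply/mnmP => l; rewrite mnmE; apply/eqP/Ea.
by case: (_ == a); rewrite ?mulr1 ?mulr0.
Qed.

Lemma tree_col_insert m ts1 t ts2 :
  tree_col (GenTree.Node m (ts1 ++ t :: ts2)) =
  polar_mx HcC (map tree_poly (ts1 ++ ts2)) *m tree_col t.
Proof.
apply/matrixP => j z; rewrite !mxE /= map_cat polar_cat_cons -map_cat.
by apply: eq_bigr => l _; rewrite !mxE mulrC.
Qed.

Lemma sum_tree_col_repl (I : Type) (r : seq I) (f : I -> ctree) T a0 :
  subt T a0 != None -> \sum_(x <- r) tree_col (f x) = 0 ->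
  \sum_(x <- r) tree_col (repl T a0 (f x)) = 0.
Proof.
elim: a0 T => [|c a IH] T; first by move=> _.
case: T => [y|m ts] //=; case: ifP => // c_lt sub_a sum0.
under eq_bigr do rewrite set_nthE c_lt tree_col_insert.
by rewrite -mulmx_sumr IH ?mulmx0.
Qed.

Lemma tree_col_rebuild d t cs L :
  dcat d t -> subt t cs != None -> size L = ((d - 1) * size cs)%N ->
  tree_col (rebuild t cs L) =
  polar_chain HcC (size cs) (d - 1) (map tree_poly L) *m tree_col (odflt t (subt t cs)).
Proof.
elim: cs t L => [|c cs IH] t L; first by rewrite mul1mx.
case: t => [x|m ts] dt sub_cs size_L; first by case/negP: sub_cs.
rewrite /= in dt sub_cs; case/andP: dt => /andP[_ /eqP size_ts] dts.
move: sub_cs; case: ifP => // c_lt sub_cs; set child := nth (GenTree.Node m ts) ts c.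
have dcat_child : dcat d child by apply: (allP dts); rewrite mem_nth.
rewrite [rebuild _ _ _]/= [subt _ _]/= c_lt -/child.
have -> : odflt (GenTree.Node m ts) (subt child cs) = odflt child (subt child cs).
  by case: (subt child cs) sub_cs.
rewrite tree_col_insert cat_take_drop size_ts -subn1 IH.
- by rewrite polar_chainS mulmxA map_take map_drop.
- exact: dcat_child.
- exact: sub_cs.
- by rewrite size_drop size_L mulnS addKn.
Qed.

End TreePolynomial.

Lemma sum_tree_col_shuffle d n (H : 'I_n -> {mpoly C[n]}) T a0 cs t0 :
  (0 < d)%N -> (forall i, H i \is d.-homog) -> mxpow (jacobian H) (size cs) = 0 ->
  dcat d t0 -> subt T a0 = Some t0 -> subt t0 cs != None ->
  \sum_(L <- permutations (sibs t0 cs))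
    tree_col (Hcoef H) (repl T a0 (rebuild t0 cs L)) = 0.
Proof.
move=> d_gt0 homH nilJ dcat_t0 sub_a0 sub_cs.
have size_S : size (sibs t0 cs) = ((d - 1) * size cs)%N by rewrite (size_sibs dcat_t0).
apply: sum_tree_col_repl; first by rewrite sub_a0.
transitivity (\sum_(L <- permutations (sibs t0 cs))
    polar_chain (fun j m => (Hcoef H j m)%:MP) (size cs) (d - 1)
      (map (tree_poly (Hcoef H)) L) *m tree_col (Hcoef H) (odflt t0 (subt t0 cs))).
  apply: eq_big_seq => L; rewrite mem_permutations => /perm_size size_L.
  by rewrite (tree_col_rebuild _ dcat_t0) // size_L.
rewrite -mulmx_suml (sum_permutations_polar_chain _ _ size_S) ?mul0mx //.
exact: polar_mx_jacobian_nilpotent.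
Qed.

Theorem lemma3p3 (d n p : nat) (H : 'I_n -> {mpoly C[n]}) :
  (2 <= d)%N -> (1 <= n)%N ->
  (forall i, H i \is d.-homog) ->
  (1 <= p <= n)%N ->
  mxpow (jacobian H) p = 0 ->
  forall (k : nat), (1 <= k)%N ->
  forall (i : 'I_n) (a : 'X_{1..n}), mdeg a = ((d - 1) * k + 1)%N ->
  forall (T : ctree) (a0 cs : seq nat),
    catalan d k T -> size cs = p -> subt T (a0 ++ cs) != None ->
    \sum_(T' <- shuffle_class T a0 cs) Eweight (Hcoef H) i a T' = 0.
Proof.
move=> d_ge2 _ homH _ nilJ k _ i a _ T a0 cs catT size_cs.
rewrite subt_cat; case sub_a0: (subt T a0) => [t0|] //= sub_cs.
have dcat_t0 : dcat d t0 by apply: dcat_subt sub_a0; case/andP: catT.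
rewrite -size_cs in nilJ.
have := sum_tree_col_shuffle (ltnW d_ge2) homH nilJ dcat_t0 sub_a0 sub_cs.
move/(congr1 (fun M : 'cV_n => (M i 0)@_a)); rewrite summxE raddf_sum mxE raddf0 => coef0.
rewrite -[RHS]coef0 (shuffle_classE sub_a0 sub_cs) big_map.
by apply: eq_bigr => L _; rewrite Eweight_tree_poly mxE.
Qed.
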